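(* Let $m>0$ be an even integer and suppose that $s=(s_A,s_B)$ is a classical deterministic winning strategy for the matching game with parameter $m$. Then there is a set $R$ of bit strings of length $m$ such that the following hold simultaneously: (1) $|R|\ge \dfrac{2^m}{2^{\lceil\log_2 m\rceil}}$; (2) the graph $G_s$ contains a connected component with more than $\frac{m}{2}$ vertices; (3) for each $\{i,j\}\in E_s$, the value $r_i\oplus r_j$ is the same for every $r\in R$.
   Context: A perfect matching on $\{0,\ldots,m-1\}$ ($m$ even) is a partition of this set into $m/2$ sets of cardinality 2; $M_m$ denotes the set of all perfect matchings. Let $L=\lceil\log_2 m\rceil$. For $n\in\{0,\ldots,m-1\}$, $\bar n\in\{0,1\}^L$ is the $L$-bit binary representation of $n$, most significant bit first. On bit strings $\oplus$ is bitwise, and $u\cdot v=\bigoplus_i(u_i\wedge v_i)$. The matching game with parameter $m$: Alice receives $x\in\{0,1\}^m$ and outputs $a\in\{0,1\}^L$; Bob receives $y\in M_m$ and outputs a two-element set $\{b_1,b_2\}\subseteq\{0,\ldots,m-1\}$ and a string $b\in\{0,1\}^L$; they win on question $(x,y)$ iff $\{b_1,b_2\}\in y$ and $x_{b_1}\oplus x_{b_2}=(\bar b_1\oplus\bar b_2)\cdot(a\oplus b)$. A classical deterministic strategy is a pair of functions $s_A:\{0,1\}^m\to\{0,1\}^L$ and $s_B:M_m\to\{\text{two-element subsets of }\{0,\ldots,m-1\}\}\times\{0,1\}^L$; it is winning if $(s_A(x),s_B(y))$ wins on every question $(x,y)\in\{0,1\}^m\times M_m$. For such $s$, $G_s=(V,E_s)$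 is the graph with vertex set $V=\{0,1,\ldots,m-1\}$ whose edge set $E_s$ consists of all two-element sets $\{i,j\}$ that Bob outputs (as the first component of $s_B(y)$) for at least one input $y\in M_m$. A connected component of a graph is a nonempty maximal connected induced subgraph; its cardinality is its number of vertices. *)

From mathcomp Require Import all_boot.
Set Implicit Arguments. Unset Strict Implicit. Unset Printing Implicit Defensive.

(* L = ceil(log2 m): smallest e with m <= 2^e (0 for m <= 1). *)
Definition Lm (m : nat) : nat := up_log 2 m.

Definition bits (n : nat) := {ffun 'I_n -> bool}.

(* L-bit binary representation, most significant bit first:
   bit k is the coefficient of 2^(L-1-k). *)
Definition bin (L n : nat) : bits L := [ffun k : 'I_L => odd (n %/ 2 ^ (L.-1 - k))].

Definition bxor (L : nat) (u v : bits L) : bits L := [ffun k => u k (+) v k].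

Definition bdot (L : nat) (u v : bits L) : bool := \big[xorb/false]_(k < L) (u k && v k).

Definition is_pm (m : nat) (y : {set {set 'I_m}}) : bool :=
  partition y [set: 'I_m] && [forall e in y, #|e| == 2].

Definition matching (m : nat) := {y : {set {set 'I_m}} | is_pm y}.

(* Alice's strategy: s_A : {0,1}^m -> {0,1}^L.
   Bob's strategy: s_B : M_m -> (b1, b2) * {0,1}^L, the output set being {b1,b2}. *)
Definition stratA (m : nat) := bits m -> bits (Lm m).
Definition stratB (m : nat) := matching m -> ('I_m * 'I_m) * bits (Lm m).

Definition wins (m : nat) (x : bits m) (y : matching m) (a : bits (Lm m))
    (o : ('I_m * 'I_m) * bits (Lm m)) : bool :=
  let: ((b1, b2), b) := o in
  ([set b1; b2] \in val y) &&
  (x b1 (+) x b2 == bdot (bxor (bin (Lm m) b1) (bin (Lm m) b2)) (bxor a b)).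

Definition winning (m : nat) (sA : stratA m) (sB : stratB m) : Prop :=
  forall (x : bits m) (y : matching m), wins x y (sA x) (sB y).

Definition Es (m : nat) (sB : stratB m) : {set {set 'I_m}} :=
  [set [set (sB y).1.1; (sB y).1.2] | y : matching m].

Definition adj (m : nat) (sB : stratB m) : rel 'I_m :=
  fun i j => [set i; j] \in Es sB.

Definition component (m : nat) (sB : stratB m) (v : 'I_m) : {set 'I_m} :=
  [set w | connect (adj sB) v w].

From mathcomp Require Import all_boot zify.

Set Implicit Arguments. Unset Strict Implicit. Unset Printing Implicit Defensive.

(* Take for R the largest fibre of Alice's strategy: it has at least 2^m / 2^L
   elements and Alice's answer a is constant on it, so for every edge {b1, b2}
   that Bob outputs on some matching, the winning condition pins r_b1 (+) r_b2
   to a value depending only on a and Bob's answer.  If every component of G_s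
   had at most m/2 vertices, then listing the vertices sorted by component and
   pairing position p with position p + m/2 would give a perfect matching none
   of whose pairs lies inside a component; yet Bob's answer on it is one of its
   pairs and an edge of G_s. *)

Lemma card_bits n : #|bits n| = 2 ^ n.
Proof. by rewrite card_ffun card_bool card_ord. Qed.

Lemma exists_large_fiber (aT rT : finType) (f : aT -> rT) (b0 : rT) :
  exists b, #|aT| <= #|[set x | f x == b]| * #|rT|.
Proof.
pose fiber b := #|[set x | f x == b]|.
exists [arg max_(b > b0) fiber b]; case: arg_maxnP => // b _ fiber_max.
have -> : #|aT| = \sum_(c : rT) fiber c.
  rewrite -sum1_card (partition_big f xpredT) //=.
  by apply: eq_bigr => c _; rewrite /fiber -sum1_card; apply: eq_bigl => x; rewrite inE.
by rewrite mulnC -sum_nat_const; apply: leq_sum => c _; apply: fiber_max.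
Qed.

Lemma card_label_class_window (T : finType) (k : T -> nat) (s : seq T) x0 a c :
    sorted (fun u v => k u <= k v) s -> uniq s -> a + c < size s ->
    k (nth x0 s a) = k (nth x0 s (a + c)) ->
  c < #|[set w | k w == k (nth x0 s a)]|.
Proof.
move=> sorted_s uniq_s lt_ac eq_ends.
have mono i j : i <= j -> j < size s -> k (nth x0 s i) <= k (nth x0 s j).
  move=> le_ij lt_j; apply: (sorted_leq_nth _ _ x0 sorted_s) => //.
  - by move=> u v w; apply: leq_trans.
  - by rewrite inE; apply: leq_ltn_trans lt_j.
pose g (d : 'I_c.+1) := nth x0 s (a + d).
have g_inj : injective g.
  move=> d1 d2 /eqP; rewrite nth_uniq //.
  - by rewrite eqn_add2l => /eqP/val_inj.
  - by rewrite (leq_ltn_trans _ lt_ac) // leq_add2l -ltnS.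
  - by rewrite (leq_ltn_trans _ lt_ac) // leq_add2l -ltnS.
rewrite -[c.+1]card_ord -cardsT -(card_imset _ g_inj); apply: subset_leq_card.
apply/subsetP => _ /imsetP[d _ ->]; have := ltn_ord d => lt_d.
rewrite inE /g eq_sym eqn_leq mono ?leq_addr //=; last by lia.
by rewrite eq_ends mono //; lia.
Qed.

Lemma exists_label_changing_involution (T : finType) (k : T -> nat) :
    ~~ odd #|T| -> (forall v, 2 * #|[set w | k w == k v]| <= #|T|) ->
  exists f : T -> T, [/\ involutive f, forall v, f v != v & forall v, k (f v) != k v].
Proof.
move=> evenT small_classes.
pose s := sort (fun u v => k u <= k v) (enum T).
pose h := #|T|./2.
have size_s : size s = h + h.
  by rewrite size_sort -cardT addnn -{1}(odd_double_half #|T|) (negbTE evenT).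
have uniq_s : uniq s by rewrite sort_uniq enum_uniq.
have mem_s v : v \in s by rewrite mem_sort mem_enum.
have sorted_s : sorted (fun u v => k u <= k v) s.
  by apply: sort_sorted => u v; apply: leq_total.
have index_lt v : index v s < h + h by rewrite -size_s index_mem.
have across x0 a : a < h -> k (nth x0 s a) != k (nth x0 s (a + h)).
  move=> lt_ah; apply/eqP => /(card_label_class_window sorted_s uniq_s).
  by rewrite size_s ltn_add2r => /(_ lt_ah); have := small_classes (nth x0 s a); lia.
pose sw p := if p < h then p + h else p - h.
pose f v := nth v s (sw (index v s)).
have index_f v : index (f v) s = sw (index v s).
  by apply: index_uniq => //; rewrite size_s /sw; have := index_lt v; case: ifP; lia.
exists f; split.
- move=> v; rewrite {1}/f index_f.
  rewrite (_ : sw (sw _) = index v s) ?nth_index //.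
  by rewrite /sw; have := index_lt v; case: ifP; case: ifP; lia.
- move=> v; apply/eqP => fv_v.
  have := congr1 (index^~ s) fv_v; rewrite /= index_f /sw.
  by have := index_lt v; case: ifP; lia.
- move=> v; rewrite /f /sw; have := index_lt v.
  case: ifP => [lt_h _ | /negbT ge_h lt_hh].
    by have := across v _ lt_h; rewrite nth_index // eq_sym.
  have lt_sub : index v s - h < h by lia.
  by have := across v _ lt_sub; rewrite subnK ?nth_index // leqNgt.
Qed.

Lemma partition_involution_pairs (T : finType) (f : T -> T) :
  involutive f -> partition [set [set v; f v] | v : T] [set: T].
Proof.
move=> fK.
have pair_of u w : w \in [set u; f u] -> [set u; f u] = [set w; f w].
  by case/set2P=> ->; rewrite // fK setUC.
apply/and3P; split.
- apply/eqP/setP => w; rewrite inE; apply/bigcupP.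
  by exists [set w; f w]; [apply/imsetP; exists w | rewrite set21].
- apply/trivIsetP => _ _ /imsetP[u _ ->] /imsetP[v _ ->].
  apply: contraR => /pred0Pn[w /andP[wu wv]].
  by rewrite (pair_of _ _ wu) (pair_of _ _ wv).
- by apply/imsetP => -[v _ /setP/(_ v)]; rewrite set21 inE.
Qed.

Lemma is_pm_involution_pairs m (f : 'I_m -> 'I_m) :
  involutive f -> (forall v, f v != v) -> is_pm [set [set v; f v] | v : 'I_m].
Proof.
move=> fK f_neq; rewrite /is_pm partition_involution_pairs //=.
by apply/forall_inP => _ /imsetP[v _ ->]; rewrite cards2 (eq_sym v) f_neq.
Qed.

Lemma addb_set2 (T : finType) (g : T -> bool) i j a b :
  [set i; j] = [set a; b] -> g i (+) g j = g a (+) g b.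
Proof.
move=> eq_ij.
have /set2P[] : i \in [set a; b] by rewrite -eq_ij set21.
all: have /set2P[] : j \in [set a; b] by rewrite -eq_ij set22.
all: move=> Ej Ei; subst i j.
- have : b \in [set a; a] by rewrite eq_ij set22.
  by case/set2P=> ->.
- by [].
- exact: addbC.
- have : a \in [set b; b] by rewrite eq_ij set21.
  by case/set2P=> ->.
Qed.

Section WinningStrategy.
Variables (m : nat) (sA : stratA m) (sB : stratB m).
Hypothesis win : winning sA sB.

Lemma winning_output_in_matching y : [set (sB y).1.1; (sB y).1.2] \in val y.
Proof. by have := win [ffun=> false] y; case: (sB y) => [[b1 b2] b] /andP[]. Qed.

Lemma winning_edge_xor_fixed i j r1 r2 :
  [set i; j] \in Es sB -> sA r1 = sA r2 -> r1 i (+) r1 j = r2 i (+) r2 j.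
Proof.
case/imsetP=> y _ eq_ij eq_a; rewrite !(addb_set2 _ eq_ij).
have := win r1 y; have := win r2 y; rewrite /wins eq_a.
by case: (sB y) => [[b1 b2] b] /= /andP[_ /eqP ->] /andP[_ /eqP ->].
Qed.

Lemma winning_large_component : ~~ odd m -> exists v, m < 2 * #|component sB v|.
Proof.
move=> even_m; apply/existsP; apply: contraT => /existsPn small.
have adj_sym : symmetric (adj sB) by move=> u v; rewrite /adj setUC.
have conn_sym := sym_connect_sym adj_sym.
pose k v := val (root (adj sB) v).
have class_k v : [set w | k w == k v] = component sB v.
  by apply/setP => w; rewrite !inE val_eqE (root_connect conn_sym) conn_sym.
have even_I : ~~ odd #|'I_m| by rewrite card_ord.
have small_k v : 2 * #|[set w | k w == k v]| <= #|'I_m|.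
  by rewrite class_k card_ord leqNgt small.
have [f [fK f_neq f_k]] := exists_label_changing_involution even_I small_k.
pose y : matching m := exist (fun y => is_pm y) _ (is_pm_involution_pairs fK f_neq).
have /imsetP[v _ eq_out] := winning_output_in_matching y.
have v_fv : adj sB v (f v) by rewrite /adj -eq_out; apply/imsetP; exists y.
have := f_k v; rewrite /k eq_sym val_eqE (root_connect conn_sym).
by rewrite connect1.
Qed.

End WinningStrategy.

Theorem lemma2 (m : nat) (hm : 0 < m) (heven : ~~ odd m)
    (sA : stratA m) (sB : stratB m) (hwin : winning sA sB) :
  exists R : {set bits m},
    [/\ 2 ^ m <= #|R| * 2 ^ Lm m,
        exists v : 'I_m, m < 2 * #|component sB v|
      & forall i j : 'I_m, [set i; j] \in Es sB ->
          forall r1 r2, r1 \in R -> r2 \in R ->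
            r1 i (+) r1 j = r2 i (+) r2 j].
Proof.
have [a large_a] := exists_large_fiber sA (sA [ffun=> false]).
exists [set x | sA x == a]; split.
- by rewrite -!card_bits.
- exact: winning_large_component.
- move=> i j ij r1 r2; rewrite !inE => /eqP r1a /eqP r2a.
  by apply: winning_edge_xor_fixed; rewrite // r1a r2a.
Qed.
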